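(* Let $\mathbb{ML}^{\Box\Diamond}_{\mathrm{S}}$ be as in the context. Every finite composition (word) $w$ of the unary operations $\neg,\Box,\Diamond$ coincides, as a unary operation on every algebra of $\mathbb{ML}^{\Box\Diamond}_{\mathrm{S}}$, with one of the following fifteen operations: the identity, $\neg\neg$, $\Box$, $\Diamond$, $\Diamond\Box$, $\Box\neg\neg$, $\Diamond\Box\neg\neg$, $\Box\Diamond$, $\neg$, $\Box\neg$, $\Diamond\neg$, $\Diamond\Box\neg$, $\Box\Diamond\neg$, $\Diamond\neg\Box$, $\neg\Box$.
   Context: A meet-complemented lattice is a lattice $(L,\le)$ (not necessarily distributive) such that for every $a\in L$ the element $\neg a=\max\{b\in L: a\wedge b\le c\ \text{for all } c\in L\}$ exists; it is bounded with bottom $0$ and top $1$. For $a\in L$, $\Box a=\max\{b\in L: a\vee\neg b=1\}$ and $\Diamond a=\min\{b\in L: \neg a\vee b=1\}$, when these exist. $\mathbb{ML}^{\Box\Diamond}_{\mathrm{S}}$ is the class of meet-complemented lattices in which $\Box a$ and $\Diamond a$ exist for every $a$ and which satisfy $\Box a\le\Box\Box a$ for all $a$. *)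

From HB Require Import structures.
From mathcomp Require Import all_boot all_order.
Set Implicit Arguments. Unset Strict Implicit. Unset Printing Implicit Defensive.
Import Order.LTheory.
Local Open Scope order_scope.

Definition is_max {d} {L : porderType d} (P : L -> Prop) (m : L) :=
  P m /\ forall b, P b -> b <= m.
Definition is_min {d} {L : porderType d} (P : L -> Prop) (m : L) :=
  P m /\ forall b, P b -> m <= b.

Definition is_meet_compl {d} {L : tbLatticeType d} (neg : L -> L) :=
  forall a, is_max (fun b => forall c, a `&` b <= c) (neg a).

Definition is_box {d} {L : tbLatticeType d} (neg box : L -> L) :=
  forall a, is_max (fun b => a `|` neg b = \top) (box a).

Definition is_dia {d} {L : tbLatticeType d} (neg dia : L -> L) :=
  forall a, is_min (fun b => neg a `|` b = \top) (dia a).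

(* the class ML^{box dia}_S, given by its (uniquely determined) operations *)
Definition in_MLS {d} {L : tbLatticeType d} (neg box dia : L -> L) :=
  [/\ is_meet_compl neg, is_box neg box, is_dia neg dia &
      forall a, box a <= box (box a)].

Inductive letter := LNeg | LBox | LDia.

(* a word [:: o1; o2; ...; on] denotes the composition o1 (o2 (... (on a))) *)
Fixpoint eval_word {T : Type} (neg box dia : T -> T) (w : seq letter) (a : T) : T :=
  match w with
  | [::] => a
  | o :: w' =>
      let x := eval_word neg box dia w' a in
      match o with LNeg => neg x | LBox => box x | LDia => dia x end
  end.

Definition fifteen : seq (seq letter) :=
  [:: [::];
      [:: LNeg; LNeg];
      [:: LBox];
      [:: LDia];
      [:: LDia; LBox];
      [:: LBox; LNeg; LNeg];
      [:: LDia; LBox; LNeg; LNeg];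
      [:: LBox; LDia];
      [:: LNeg];
      [:: LBox; LNeg];
      [:: LDia; LNeg];
      [:: LDia; LBox; LNeg];
      [:: LBox; LDia; LNeg];
      [:: LDia; LNeg; LBox];
      [:: LNeg; LBox] ].

From HB Require Import structures.
From mathcomp Require Import all_boot all_order.
Set Implicit Arguments. Unset Strict Implicit. Unset Printing Implicit Defensive.
Import Order.LTheory.
Local Open Scope order_scope.

(* The meet-complement [neg] is an antitone pseudocomplement with
   [a <= neg (neg a)], hence [neg neg neg = neg]; [dia] is left adjoint to
   [box] ([dia a <= b <-> a <= box b]), whence [box dia box = box] and
   [dia box dia = dia].  Moreover [box a <= neg (neg a)] always holds, and
   together with [box a <= box (box a)] this makes [box] and [dia] idempotent
   and [box]-values [neg]-regular.  A dozen such word identities show that the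
   fifteen words are closed under prefixing by [neg], [box] and [dia]. *)

Definition eq_letter (o o' : letter) : bool :=
  match o, o' with
  | LNeg, LNeg | LBox, LBox | LDia, LDia => true
  | _, _ => false
  end.

Lemma eq_letterP : Equality.axiom eq_letter.
Proof. by do 2 case; constructor. Qed.

HB.instance Definition _ := hasDecEq.Build letter eq_letterP.

(* Left multiplication table of the fifteen words; the catch-all branches are
   never reached from a word of [fifteen]. *)
Definition cons_normal (o : letter) (u : seq letter) : seq letter :=
  match o, u with
  | LNeg, [::] => [:: LNeg]
  | LNeg, [:: LNeg; LNeg] => [:: LNeg]
  | LNeg, [:: LBox] => [:: LNeg; LBox]
  | LNeg, [:: LDia] => [:: LBox; LNeg]
  | LNeg, [:: LDia; LBox] => [:: LNeg; LBox]
  | LNeg, [:: LBox; LNeg; LNeg] => [:: LBox; LDia; LNeg]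
  | LNeg, [:: LDia; LBox; LNeg; LNeg] => [:: LBox; LDia; LNeg]
  | LNeg, [:: LBox; LDia] => [:: LBox; LNeg]
  | LNeg, [:: LNeg] => [:: LNeg; LNeg]
  | LNeg, [:: LBox; LNeg] => [:: LBox; LDia]
  | LNeg, [:: LDia; LNeg] => [:: LBox; LNeg; LNeg]
  | LNeg, [:: LDia; LBox; LNeg] => [:: LBox; LDia]
  | LNeg, [:: LBox; LDia; LNeg] => [:: LBox; LNeg; LNeg]
  | LNeg, [:: LDia; LNeg; LBox] => [:: LBox]
  | LNeg, [:: LNeg; LBox] => [:: LBox]
  | LBox, [::] | LBox, [:: LBox] | LBox, [:: LDia; LBox] => [:: LBox]
  | LBox, [:: LNeg; LNeg] | LBox, [:: LBox; LNeg; LNeg]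
  | LBox, [:: LDia; LBox; LNeg; LNeg] => [:: LBox; LNeg; LNeg]
  | LBox, [:: LDia] | LBox, [:: LBox; LDia] => [:: LBox; LDia]
  | LBox, [:: LNeg] | LBox, [:: LBox; LNeg] | LBox, [:: LDia; LBox; LNeg] =>
      [:: LBox; LNeg]
  | LBox, [:: LDia; LNeg] | LBox, [:: LBox; LDia; LNeg] => [:: LBox; LDia; LNeg]
  | LBox, [:: LDia; LNeg; LBox] | LBox, [:: LNeg; LBox] => [:: LNeg; LBox]
  | LDia, [::] | LDia, [:: LNeg; LNeg] | LDia, [:: LDia]
  | LDia, [:: LBox; LDia] => [:: LDia]
  | LDia, [:: LBox] | LDia, [:: LDia; LBox] => [:: LDia; LBox]
  | LDia, [:: LBox; LNeg; LNeg] | LDia, [:: LDia; LBox; LNeg; LNeg] =>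
      [:: LDia; LBox; LNeg; LNeg]
  | LDia, [:: LNeg] | LDia, [:: LDia; LNeg] | LDia, [:: LBox; LDia; LNeg] =>
      [:: LDia; LNeg]
  | LDia, [:: LBox; LNeg] | LDia, [:: LDia; LBox; LNeg] => [:: LDia; LBox; LNeg]
  | LDia, [:: LDia; LNeg; LBox] | LDia, [:: LNeg; LBox] => [:: LDia; LNeg; LBox]
  | _, _ => u
  end.

Lemma cons_normal_in_fifteen o :
  {in fifteen, forall u, cons_normal o u \in fifteen}.
Proof. by case: o; apply/allP. Qed.

Definition normal_form (w : seq letter) : seq letter := foldr cons_normal [::] w.

Lemma normal_form_in_fifteen w : normal_form w \in fifteen.
Proof. by elim: w => [|o w IHw] //=; apply: cons_normal_in_fifteen. Qed.

Section ModalLattice.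
Variables (d : Order.disp_t) (L : tbLatticeType d) (neg box dia : L -> L).
Hypothesis hneg : is_meet_compl neg.
Hypothesis hbox : is_box neg box.
Hypothesis hdia : is_dia neg dia.

Lemma le_negP a b : b <= neg a <-> a `&` b = \bot.
Proof.
have [negaP neg_max] := hneg a; split => [b_le|ab0].
  apply/le_anti; rewrite le0x andbT.
  by apply: le_trans (negaP \bot); rewrite leI2.
by apply: neg_max => c; rewrite ab0 le0x.
Qed.

Lemma meetxN a : a `&` neg a = \bot.
Proof. exact/le_negP. Qed.

Lemma neg_le x y : x <= y -> neg y <= neg x.
Proof.
move=> xy; apply/le_negP/le_anti; rewrite le0x andbT -(meetxN y).
by rewrite leI2.
Qed.

Lemma le_neg_neg x : x <= neg (neg x).
Proof. by apply/le_negP; rewrite meetC meetxN. Qed.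

Lemma neg_neg_neg x : neg (neg (neg x)) = neg x.
Proof. by apply/le_anti; rewrite le_neg_neg neg_le // le_neg_neg. Qed.

Lemma le_boxP a b : b <= box a <-> a `|` neg b = \top.
Proof.
have [boxaP box_max] := hbox a; split=> [b_le|]; last exact: box_max.
by apply/le_anti; rewrite lex1 /= -boxaP leU2 // neg_le.
Qed.

Lemma dia_leP a b : dia a <= b <-> neg a `|` b = \top.
Proof.
have [diaaP dia_min] := hdia a; split=> [le_b|]; last exact: dia_min.
by apply/le_anti; rewrite lex1 /= -diaaP leU2.
Qed.

Lemma dia_le_box a b : dia a <= b <-> a <= box b.
Proof.
by split=> [/dia_leP|/le_boxP]; rewrite joinC; [move/le_boxP | move/dia_leP].
Qed.

Lemma le_box_dia a : a <= box (dia a).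
Proof. exact/dia_le_box. Qed.

Lemma dia_box_le a : dia (box a) <= a.
Proof. exact/dia_le_box. Qed.

Lemma box_le x y : x <= y -> box x <= box y.
Proof.
move=> xy; apply/le_boxP/le_anti; rewrite lex1 /=.
by rewrite -(le_boxP x (box x)).1 // leU2.
Qed.

Lemma dia_le x y : x <= y -> dia x <= dia y.
Proof. by move=> xy; apply/dia_le_box/(le_trans xy)/le_box_dia. Qed.

(* With [e := neg x `&` box x], both [x] and [neg (box x)] lie below [neg e];
   as [x `|` neg (box x) = \top], [neg e = \top], so [e = e `&` neg e = \bot]. *)
Lemma box_le_neg_neg x : box x <= neg (neg x).
Proof.
apply/le_negP; set e := neg x `&` box x.
have x_le : x <= neg e.
  by apply/le_negP; rewrite /e meetAC [neg x `&` x]meetC meetxN meet0x.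
have Nbox_le : neg (box x) <= neg e by apply: neg_le; rewrite leIr.
have negeT : neg e = \top.
  by apply/le_anti; rewrite lex1 /= -(le_boxP x (box x)).1 // leUx x_le.
by apply/le_anti; rewrite le0x andbT -(meetxN e) negeT meetx1.
Qed.

Lemma neg_neg_box x : neg (neg (box x)) = box x.
Proof.
apply/le_anti; rewrite le_neg_neg andbT.
by apply/le_boxP; rewrite neg_neg_neg; apply/le_boxP.
Qed.

Lemma dia_neg_neg x : dia (neg (neg x)) = dia x.
Proof.
apply/le_anti/andP; split; apply/dia_leP.
  by rewrite neg_neg_neg; apply/dia_leP.
by rewrite -{1}neg_neg_neg; apply/dia_leP.
Qed.

Lemma neg_dia x : neg (dia x) = box (neg x).
Proof.
apply/le_anti/andP; split; first by apply/le_boxP/dia_leP/le_neg_neg.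
by apply/le_negP; rewrite meetC; apply/le_negP/dia_leP/le_boxP.
Qed.

Lemma box_dia_box x : box (dia (box x)) = box x.
Proof. by apply/le_anti; rewrite le_box_dia box_le // dia_box_le. Qed.

Lemma dia_box_dia x : dia (box (dia x)) = dia x.
Proof. by apply/le_anti; rewrite dia_box_le dia_le // le_box_dia. Qed.

Hypothesis box4 : forall a, box a <= box (box a).

Lemma box_box x : box (box x) = box x.
Proof.
by apply/le_anti; rewrite box4 andbT -[X in _ <= X]neg_neg_box box_le_neg_neg.
Qed.

Lemma dia_dia x : dia (dia x) = dia x.
Proof.
apply/le_anti/andP; split.
  by apply/dia_le_box/dia_le_box; rewrite box_box le_box_dia.
by apply/dia_le_box; rewrite -box_box; apply/dia_le_box/le_box_dia.
Qed.

Lemma box_neg_box x : box (neg (box x)) = neg (box x).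
Proof.
apply/le_anti/andP; split.
  by rewrite -[X in _ <= X]neg_neg_neg box_le_neg_neg.
by apply/le_boxP; rewrite neg_neg_box joinC; apply/le_boxP/box4.
Qed.

Lemma neg_box_neg x : neg (box (neg x)) = box (dia x).
Proof.
rewrite -neg_dia; apply/le_anti; rewrite box_le_neg_neg andbT.
by apply/le_boxP; rewrite neg_neg_neg joinC; apply/dia_leP; rewrite dia_dia.
Qed.

Lemma neg_box_dia x : neg (box (dia x)) = box (neg x).
Proof. by rewrite -neg_box_neg neg_neg_box. Qed.

Lemma box_dia_neg_box x : box (dia (neg (box x))) = neg (box x).
Proof. by rewrite -neg_box_neg neg_neg_box box_box. Qed.


Lemma eval_cons_normal o u a : u \in fifteen ->
  eval_word neg box dia (cons_normal o u) a = eval_word neg box dia (o :: u) a.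
Proof.
rewrite !inE; case: o; do ![case/orP=> [|]]; move/eqP=> -> /=;
by rewrite ?(neg_neg_neg, dia_neg_neg, box_box, dia_dia, neg_dia, neg_neg_box,
  box_neg_box, neg_box_neg, box_dia_box, dia_box_dia, neg_box_dia,
  box_dia_neg_box).
Qed.

Lemma eval_normal_form w a :
  eval_word neg box dia w a = eval_word neg box dia (normal_form w) a.
Proof.
elim: w => [|o w IHw] //=.
by rewrite eval_cons_normal ?normal_form_in_fifteen //= IHw.
Qed.

End ModalLattice.

Theorem proposition22 :
  forall w : seq letter,
  exists i : 'I_(size fifteen), let u := nth [::] fifteen i in
    forall (d : Order.disp_t) (L : tbLatticeType d) (neg box dia : L -> L),
      in_MLS neg box dia ->
      forall a : L, eval_word neg box dia w a = eval_word neg box dia u a.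
Proof.
move=> w; have nf_in := normal_form_in_fifteen w.
have lt_nf : (index (normal_form w) fifteen < size fifteen)%N by rewrite index_mem.
exists (Ordinal lt_nf) => /= d L neg box dia [hneg hbox hdia box4] a.
by rewrite nth_index // (eval_normal_form hneg hbox hdia box4).
Qed.
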